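(* Suppose that the Collatz map $T$ has no cycle of positive integers other than the trivial cycle $\{1,2\}$. Then the operator $\mathcal{T}$ on $H_{ber}^2(D)/X$ is hypercyclic, i.e. there exists a vector $v\in H_{ber}^2(D)/X$ whose orbit $\{\mathcal{T}^n v: n\ge 0\}$ is dense in $H_{ber}^2(D)/X$.
   Context: $T:\mathbb{Z}\to\mathbb{Z}$ is the (reduced) Collatz map: $T(n)=\frac{3n+1}{2}$ for odd $n$ and $T(n)=\frac n2$ for even $n$. A cycle is a finite set $\{n_1,\dots,n_k\}$ with $T(n_i)=n_{i+1}$, $T(n_k)=n_1$. $D$ is the open unit disk. $H_{ber}^2(D)$ is the Bergman space of holomorphic $f$ on $D$ with $\|f\|^2=\int_D|f|^2\,dA<\infty$ (so $\|z^n\|^2=\frac{\pi}{n+1}$). The operator $\mathcal{T}$ acts on power series by $\sum_{n\ge0} a_nz^n\mapsto\sum_{n\ge0} a_n z^{T(n)}$ (equivalently $\mathcal{T}f(z)=(Sf)(\sqrt z)+\sqrt z\,(Af)(z^{3/2})$ with $S,A$ the even and odd parts of $f$); it is bounded on $H_{ber}^2(D)$, leaves $X=\operatorname{span}\{1,z,z^2\}$ invariant, and induces a bounded operator on the quotient Banach space $H_{ber}^2(D)/X$, still denoted $\mathcal{T}$. *)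

From Stdlib Require Import Reals ZArith List Lra.
From Coquelicot Require Import Coquelicot.
Import ListNotations.
Open Scope R_scope.

Definition collatzZ (n : Z) : Z :=
  if Z.even n then (n / 2)%Z else ((3 * n + 1) / 2)%Z.

Definition is_cycle (l : list Z) : Prop :=
  l <> [] /\
  forall i : nat, (i < length l)%nat ->
    collatzZ (nth i l 0%Z) = nth (Nat.modulo (S i) (length l)) l 0%Z.

Definition no_nontrivial_positive_cycle : Prop :=
  forall l : list Z, is_cycle l -> (forall x, In x l -> (0 < x)%Z) ->
    forall x : Z, In x l <-> (x = 1%Z \/ x = 2%Z).

(* T restricted to the natural numbers (exponents of power series). *)
Definition collatzN (n : nat) : nat := Z.to_nat (collatzZ (Z.of_nat n)).

(* Holomorphic functions on D are identified with their Taylor coefficient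
   sequences a : nat -> C.  Bergman norm: ||sum a_n z^n||^2 = sum pi/(n+1) |a_n|^2
   (the monomials z^n are orthogonal with ||z^n||^2 = pi/(n+1)). *)
Definition bergman_terms (a : nat -> C) (n : nat) : R :=
  PI / INR (S n) * (Cmod (a n))^2.

Definition in_bergman (a : nat -> C) : Prop := ex_series (bergman_terms a).

Definition bergman_norm (a : nat -> C) : R := sqrt (Series (bergman_terms a)).

(* The operator sum a_n z^n |-> sum a_n z^{T(n)}: the coefficient of z^m is the
   sum of a_n over the n with T(n) = m; all such n satisfy n <= 2m. *)
Definition collatz_op (a : nat -> C) (m : nat) : C :=
  sum_n (fun n => if Nat.eqb (collatzN n) m then a n else RtoC 0) (2 * m).

Definition in_X (x : nat -> C) : Prop := forall n : nat, (3 <= n)%nat -> x n = RtoC 0.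

(* Let n_k = g_0 + ... + g_k grow fast and let v carry, for every k, a copy of a
   polynomial y_k (of degree in [3, D_k]) stretched onto the exponents 2^(n_k) j.  Since
   T(2m) = m, the iterate T^(n_k) moves block k back onto y_k exactly.  The later blocks are
   still stretched by at least 2^(g_k'), so they sit at large exponents where the Bergman weight
   pi/(m+1) is small.  The earlier blocks have undergone at least g_k further Collatz steps; with
   no cycle other than {1,2}, an orbit that never enters {0,1,2} is injective and hence tends
   to infinity, so for g_k large every exponent of an earlier block lies in {0,1,2}, which the
   quotient by X forgets, or beyond a threshold where the weight is again small.  Choosing g_k
   after y_0, ..., y_k makes both errors at most 2^-k, and letting (y_k) run through a dense
   sequence in which every term recurs at arbitrarily large k gives a dense orbit. *)

From Stdlib Require Import Reals ZArith List.
From Coquelicot Require Import Coquelicot.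
From Stdlib Require Import Lra Lia Classical IndefiniteDescription.
From Stdlib Require Cantor.
Open Scope R_scope.

(** * The Collatz map on exponents *)

Lemma Zeven_of_nat n : Z.even (Z.of_nat n) = Nat.even n.
Proof.
  destruct (Nat.Even_or_Odd n) as [[k ->] | [k ->]];
    rewrite ?Nat2Z.inj_add, Nat2Z.inj_mul, ?Z.even_add, Z.even_mul, ?Nat.even_add, Nat.even_mul;
    reflexivity.
Qed.

Lemma collatzN_spec n :
  collatzN n = if Nat.even n then (n / 2)%nat else ((3 * n + 1) / 2)%nat.
Proof.
  unfold collatzN, collatzZ. rewrite Zeven_of_nat.
  destruct (Nat.even n); rewrite <- Nat2Z.id; f_equal; rewrite Nat2Z.inj_div;
    [reflexivity | now rewrite Nat2Z.inj_add, Nat2Z.inj_mul].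
Qed.

Lemma collatzZ_of_nat n : collatzZ (Z.of_nat n) = Z.of_nat (collatzN n).
Proof.
  unfold collatzN. rewrite Z2Nat.id; [reflexivity |].
  unfold collatzZ. destruct (Z.even _); apply Z.div_pos; lia.
Qed.

Lemma collatzN_double m : collatzN (2 * m) = m.
Proof.
  rewrite collatzN_spec, Nat.even_mul, Nat.mul_comm, Nat.div_mul by lia. reflexivity.
Qed.

Lemma le_double_collatzN n : (n <= 2 * collatzN n)%nat.
Proof.
  rewrite collatzN_spec. destruct (Nat.even n) eqn:E.
  - destruct (proj1 (Nat.even_spec n) E) as [k ->].
    rewrite Nat.mul_comm, Nat.div_mul; lia.
  - pose proof (Nat.div_mod_eq (3 * n + 1) 2). pose proof (Nat.mod_upper_bound (3 * n + 1) 2). lia.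
Qed.

Definition collatz_iter (t n : nat) : nat := Nat.iter t collatzN n.

Lemma collatz_iter_add a b n : collatz_iter (a + b) n = collatz_iter a (collatz_iter b n).
Proof. apply Nat.iter_add. Qed.

Lemma collatz_iter_pow2 t j : collatz_iter t (2 ^ t * j) = j.
Proof.
  revert j; induction t as [|t IH]; intro j; simpl; [lia |].
  replace ((2 ^ t + (2 ^ t + 0)) * j)%nat with (2 ^ t * (2 * j))%nat by lia.
  change (collatzN (collatz_iter t (2 ^ t * (2 * j))) = j).
  rewrite IH. apply collatzN_double.
Qed.

Lemma collatz_iter_pow2_le n e j :
  (n <= e)%nat -> collatz_iter n (2 ^ e * j) = (2 ^ (e - n) * j)%nat.
Proof.
  intro H. replace (2 ^ e * j)%nat with (2 ^ n * (2 ^ (e - n) * j))%nat.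
  - apply collatz_iter_pow2.
  - rewrite Nat.mul_assoc, <- Nat.pow_add_r. do 2 f_equal. lia.
Qed.

Lemma collatz_iter_pow2_ge n e j :
  (e <= n)%nat -> collatz_iter n (2 ^ e * j) = collatz_iter (n - e) j.
Proof.
  intro H. replace n with ((n - e) + e)%nat at 1 by lia.
  rewrite collatz_iter_add, collatz_iter_pow2. reflexivity.
Qed.

Lemma le_pow2_collatz_iter t i : (i <= 2 ^ t * collatz_iter t i)%nat.
Proof.
  induction t as [|t IH]; simpl; [lia |].
  pose proof (le_double_collatzN (collatz_iter t i)).
  change (i <= (2 ^ t + (2 ^ t + 0)) * collatzN (collatz_iter t i))%nat. nia.
Qed.

Lemma collatz_iter_le_2 t x : (x <= 2)%nat -> (collatz_iter t x <= 2)%nat.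
Proof.
  intro Hx; induction t as [|t IH]; simpl; [exact Hx |].
  change (collatzN (collatz_iter t x) <= 2)%nat.
  destruct (collatz_iter t x) as [|[|[|]]]; [vm_compute; lia .. | lia].
Qed.

(** * Escaping orbits *)

Lemma injective_eventually_ge (f : nat -> nat) :
  (forall a b, f a = f b -> a = b) ->
  forall M, exists G, forall t, (G <= t)%nat -> (M <= f t)%nat.
Proof.
  intros Hinj M. induction M as [|M [G HG]].
  - exists 0%nat. intros; lia.
  - destruct (classic (exists t0, f t0 = M)) as [[t0 Ht0] | Hn].
    + exists (Nat.max G (S t0)). intros t Ht.
      assert (M <= f t)%nat by (apply HG; lia).
      assert (f t <> M) by (intro E; rewrite <- Ht0 in E; apply Hinj in E; lia). lia.
    + exists G. intros t Ht.
      assert (M <= f t)%nat by (apply HG; lia).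
      assert (f t <> M) by (intro E; apply Hn; exists t; exact E). lia.
Qed.

Lemma eventually_forall_lt (P : nat -> nat -> Prop) :
  (forall j, exists G, forall t, (G <= t)%nat -> P j t) ->
  forall J, exists G, forall j t, (j < J)%nat -> (G <= t)%nat -> P j t.
Proof.
  intros HP J. induction J as [|J [G HG]].
  - exists 0%nat. intros; lia.
  - destruct (HP J) as [G' HG']. exists (Nat.max G G'). intros j t Hj Ht.
    destruct (Nat.eq_dec j J) as [-> |]; [apply HG'; lia | apply HG; lia].
Qed.

Lemma collatz_orbit_segment_cycle j a L :
  (0 < L)%nat -> collatz_iter (L + a) j = collatz_iter a j ->
  is_cycle (map (fun i => Z.of_nat (collatz_iter (i + a) j)) (seq 0 L)).
Proof.
  intros HL Hper.
  set (x := fun i => Z.of_nat (collatz_iter (i + a) j)).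
  assert (Hnth : forall i, (i < L)%nat -> nth i (map x (seq 0 L)) 0%Z = x i).
  { intros i Hi. rewrite nth_indep with (d' := x 0%nat) by now rewrite length_map, length_seq.
    rewrite map_nth, seq_nth by exact Hi. reflexivity. }
  unfold is_cycle. rewrite length_map, length_seq. split.
  - destruct L; [lia | discriminate].
  - intros i Hi. rewrite !Hnth by (try apply Nat.mod_upper_bound; lia).
    unfold x. rewrite collatzZ_of_nat. f_equal.
    change (collatzN (collatz_iter (i + a) j)) with (collatz_iter (S (i + a)) j).
    destruct (Nat.eq_dec (S i) L) as [<- | HiL].
    + rewrite Nat.Div0.mod_same. exact Hper.
    + rewrite Nat.mod_small by lia. reflexivity.
Qed.

Lemma collatz_orbit_repeat_le_2 (Hc : no_nontrivial_positive_cycle) j a b :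
  (a < b)%nat -> collatz_iter a j = collatz_iter b j ->
  exists t, (collatz_iter t j <= 2)%nat.
Proof.
  intros Hab Heq.
  set (l := map (fun i => Z.of_nat (collatz_iter (i + a) j)) (seq 0 (b - a))).
  assert (Hcyc : is_cycle l).
  { apply collatz_orbit_segment_cycle; [lia |]. now replace (b - a + a)%nat with b by lia. }
  destruct (classic (forall x, In x l -> (0 < x)%Z)) as [Hpos | Hneg].
  - destruct (proj1 (in_map_iff _ _ _) (proj2 (Hc l Hcyc Hpos 1%Z) (or_introl eq_refl)))
      as [i [Hi _]].
    exists (i + a)%nat. lia.
  - apply not_all_ex_not in Hneg. destruct Hneg as [x Hx].
    apply imply_to_and in Hx. destruct Hx as [Hx Hx0].
    apply in_map_iff in Hx. destruct Hx as [i [<- _]].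
    exists (i + a)%nat. lia.
Qed.

Lemma collatz_escape (Hc : no_nontrivial_positive_cycle) M j :
  exists G, forall t, (G <= t)%nat ->
    (collatz_iter t j <= 2)%nat \/ (M <= collatz_iter t j)%nat.
Proof.
  destruct (classic (exists t0, collatz_iter t0 j <= 2)%nat) as [[t0 Ht0] | Hn].
  - exists t0. intros t Ht. left. replace t with ((t - t0) + t0)%nat by lia.
    rewrite collatz_iter_add. apply collatz_iter_le_2, Ht0.
  - assert (Hinj : forall a b, collatz_iter a j = collatz_iter b j -> a = b).
    { intros a b E. destruct (lt_eq_lt_dec a b) as [[H | H] | H]; auto; exfalso; apply Hn.
      - exact (collatz_orbit_repeat_le_2 Hc j a b H E).
      - exact (collatz_orbit_repeat_le_2 Hc j b a H (eq_sym E)). }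
    destruct (injective_eventually_ge _ Hinj M) as [G HG].
    exists G. intros t Ht. right. apply HG, Ht.
Qed.

Lemma collatz_escape_blocks (Hc : no_nontrivial_positive_cycle) (D : nat -> nat) K M :
  exists G, forall k j t, (k < K)%nat -> (j <= D k)%nat -> (G <= t)%nat ->
    (collatz_iter t j <= 2)%nat \/ (M <= collatz_iter t j)%nat.
Proof.
  assert (Hblock : forall k, exists G, forall t, (G <= t)%nat -> forall j, (j <= D k)%nat ->
            (collatz_iter t j <= 2)%nat \/ (M <= collatz_iter t j)%nat).
  { intro k. destruct (eventually_forall_lt _ (collatz_escape Hc M) (S (D k))) as [G HG].
    exists G. intros t Ht j Hj. apply HG; lia. }
  destruct (eventually_forall_lt _ Hblock K) as [G HG].
  exists G. intros k j t Hk Hj Ht. now apply (HG k t).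
Qed.

(** * Finite sums *)

Lemma sum_n_zero {G : AbelianMonoid} N : sum_n (fun _ => @zero G) N = zero.
Proof. apply sum_n_m_const_zero. Qed.

Lemma sum_n_eq_zero {G : AbelianMonoid} (a : nat -> G) N :
  (forall i, (i <= N)%nat -> a i = zero) -> sum_n a N = zero.
Proof. intro H. rewrite (sum_n_ext_loc a (fun _ => zero) N H). apply sum_n_zero. Qed.

Lemma sum_n_kronecker {G : AbelianMonoid} (x N : nat) (c : nat -> G) :
  sum_n (fun l => if Nat.eqb l x then c l else zero) N = if Nat.leb x N then c x else zero.
Proof.
  rewrite (sum_n_ext _ (fun l => if Nat.eqb l x then c x else zero))
    by (intro l; destruct (Nat.eqb_spec l x) as [-> |]; reflexivity).
  induction N as [|N IH].
  - rewrite sum_O. destruct x; reflexivity.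
  - rewrite sum_Sn, IH.
    destruct (Nat.leb x N) eqn:E1; destruct (Nat.eqb (S N) x) eqn:E2;
      destruct (Nat.leb x (S N)) eqn:E3;
      rewrite ?Nat.leb_le, ?Nat.leb_gt, ?Nat.eqb_eq, ?Nat.eqb_neq in *; try lia;
      rewrite ?plus_zero_l, ?plus_zero_r; reflexivity.
Qed.

Lemma sum_n_kronecker_if {G : AbelianMonoid} (P : nat -> bool) (x N : nat) (c : G) :
  sum_n (fun i => if P i then (if Nat.eqb x i then c else zero) else zero) N
  = if Nat.leb x N then (if P x then c else zero) else zero.
Proof.
  rewrite <- (sum_n_kronecker x N (fun i => if P i then c else zero)).
  apply sum_n_ext. intro i.
  rewrite Nat.eqb_sym. destruct (Nat.eqb_spec i x) as [-> |]; [| destruct (P i)]; reflexivity.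
Qed.

Lemma sum_n_if {G : AbelianMonoid} (b : bool) (u : nat -> G) N :
  (if b then sum_n u N else zero) = sum_n (fun l => if b then u l else zero) N.
Proof. destruct b; [reflexivity | symmetry; apply sum_n_zero]. Qed.

Lemma sum_n_extend {G : AbelianMonoid} (a : nat -> G) K B :
  (forall i, (K < i)%nat -> a i = zero) -> (K <= B)%nat -> sum_n a B = sum_n a K.
Proof.
  intros Ha HB. induction HB as [|B HB IH]; [reflexivity |].
  rewrite sum_Sn, IH, Ha by lia. apply plus_zero_r.
Qed.

Lemma sum_n_le (a b : nat -> R) N :
  (forall i, (i <= N)%nat -> a i <= b i) -> sum_n a N <= sum_n b N.
Proof.
  induction N as [|N IH]; intro H.
  - rewrite !sum_O. apply H. lia.
  - rewrite !sum_Sn. apply Rplus_le_compat; [apply IH; intros i Hi |]; apply H; lia.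
Qed.

Lemma sum_n_nonneg (a : nat -> R) N : (forall i, (i <= N)%nat -> 0 <= a i) -> 0 <= sum_n a N.
Proof.
  intro H. apply Rle_trans with (sum_n (fun _ => 0) N).
  - right. symmetry. apply (sum_n_zero (G := R_AbelianMonoid)).
  - apply sum_n_le, H.
Qed.

Lemma sum_n_kronecker_le (x M : nat) (c : R) : 0 <= c ->
  sum_n (fun m => if Nat.eqb m x then c else 0) M <= c.
Proof.
  intro Hc.
  assert (E : sum_n (fun m => if Nat.eqb m x then c else 0) M = if Nat.leb x M then c else 0)
    by exact (sum_n_kronecker (G := R_AbelianMonoid) x M (fun _ => c)).
  rewrite E. destruct (Nat.leb x M); lra.
Qed.

Lemma sum_n_add_R (a b : nat -> R) N : sum_n (fun i => a i + b i) N = sum_n a N + sum_n b N.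
Proof. exact (sum_n_plus a b N). Qed.

Lemma sum_n_scal_R (c : R) (a : nat -> R) N : sum_n (fun i => c * a i) N = c * sum_n a N.
Proof. exact (sum_n_mult_l (K := R_Ring) c a N). Qed.

Lemma sum_n_triple_switch (F : nat -> bool) (D : nat -> nat) (X : nat -> nat -> nat -> R) B M :
  sum_n (fun m => sum_n (fun k => if F k then sum_n (fun j => X k j m) (D k) else 0) B) M
  = sum_n (fun k => if F k then sum_n (fun j => sum_n (fun m => X k j m) M) (D k) else 0) B.
Proof.
  rewrite (sum_n_switch (fun m k => if F k then sum_n (fun j => X k j m) (D k) else 0)).
  apply sum_n_ext; intro k. destruct (F k).
  - apply (sum_n_switch (fun m j => X k j m)).
  - apply (sum_n_zero (G := R_AbelianMonoid)).
Qed.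

Lemma Cmod_sum_n_le (z : nat -> C) N : Cmod (sum_n z N) <= sum_n (fun i => Cmod (z i)) N.
Proof. apply (norm_sum_n_m z 0 N). Qed.

Lemma Cmod_if (b : bool) (z : C) : Cmod (if b then z else 0) = if b then Cmod z else 0.
Proof. destruct b; [reflexivity | apply Cmod_0]. Qed.

Lemma Cmod_sum_n_sq_le_of_single (z : nat -> C) N :
  (forall a b, (a <= N)%nat -> (b <= N)%nat -> z a <> 0 -> z b <> 0 -> a = b) ->
  (Cmod (sum_n z N)) ^ 2 <= sum_n (fun i => (Cmod (z i)) ^ 2) N.
Proof.
  induction N as [|N IH]; intro Hz.
  - rewrite !sum_O. lra.
  - rewrite !sum_Sn.
    change (Cmod (sum_n z N + z (S N)) ^ 2
            <= sum_n (fun i => Cmod (z i) ^ 2) N + Cmod (z (S N)) ^ 2).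
    assert (Hp : 0 <= sum_n (fun i => (Cmod (z i)) ^ 2) N)
      by (apply sum_n_nonneg; intros; apply pow2_ge_0).
    destruct (Ceq_dec (z (S N)) 0) as [E | E].
    + rewrite E, Cplus_0_r, Cmod_0.
      assert (Cmod (sum_n z N) ^ 2 <= sum_n (fun i => Cmod (z i) ^ 2) N) by (apply IH; auto).
      rewrite pow_i by lia. lra.
    + rewrite (sum_n_eq_zero z N) by
        (intros i Hi; destruct (Ceq_dec (z i) 0) as [| Hi0]; [assumption |];
         specialize (Hz i (S N) ltac:(lia) ltac:(lia) Hi0 E); lia).
      change (Cmod (0 + z (S N)) ^ 2 <= sum_n (fun i => Cmod (z i) ^ 2) N + Cmod (z (S N)) ^ 2).
      rewrite Cplus_0_l. lra.
Qed.

Lemma Cmod_add3_sq_le (a b c : C) :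
  Cmod (a + b + c) ^ 2 <= 3 * (Cmod a ^ 2 + Cmod b ^ 2 + Cmod c ^ 2).
Proof.
  assert (H : Cmod (a + b + c) <= Cmod a + Cmod b + Cmod c).
  { pose proof (Cmod_triangle (a + b) c). pose proof (Cmod_triangle a b). lra. }
  pose proof (Cmod_ge_0 (a + b + c)).
  pose proof (pow2_ge_0 (Cmod a - Cmod b)). pose proof (pow2_ge_0 (Cmod b - Cmod c)).
  pose proof (pow2_ge_0 (Cmod a - Cmod c)).
  apply Rle_trans with ((Cmod a + Cmod b + Cmod c) ^ 2); [apply pow_incr; lra | nra].
Qed.

Lemma ex_series_le_of_partial_sums (a : nat -> R) (B : R) :
  (forall n, 0 <= a n) -> (forall N, sum_n a N <= B) -> ex_series a /\ Series a <= B.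
Proof.
  intros Ha HB.
  assert (Hinc : forall n, sum_n a n <= sum_n a (S n)).
  { intro n. rewrite sum_Sn. specialize (Ha (S n)). change (plus ?x ?y) with (x + y). lra. }
  destruct (ex_finite_lim_seq_incr (sum_n a) B Hinc HB) as [l Hl].
  split; [now exists l |].
  rewrite (is_series_unique a l Hl).
  exact (is_lim_seq_le _ _ l B HB Hl (is_lim_seq_const B)).
Qed.

Lemma half_pow_pos k : 0 < (1 / 2) ^ k.
Proof. apply pow_lt; lra. Qed.

Lemma half_pow_antimono a b : (a <= b)%nat -> (1 / 2) ^ b <= (1 / 2) ^ a.
Proof.
  intro H. replace b with (a + (b - a))%nat by lia. rewrite pow_add.
  pose proof (half_pow_pos a). pose proof (half_pow_pos (b - a)).
  assert ((1 / 2) ^ (b - a) <= 1) 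
    by (rewrite <- (pow1 (b - a)) at 2; apply pow_incr; split; lra).
  nra.
Qed.

Lemma sum_n_half_pow_gt (k0 B : nat) :
  sum_n (fun k => if Nat.ltb k0 k then (1 / 2) ^ k else 0) B <= (1 / 2) ^ k0.
Proof.
  assert (E : sum_n (fun k => if Nat.ltb k0 k then (1 / 2) ^ k else 0) B
              = (1 / 2) ^ k0 - (1 / 2) ^ (Nat.max B k0)).
  { induction B as [|B IH].
    - rewrite sum_O. destruct k0; simpl; lra.
    - rewrite sum_Sn, IH. change (plus ?a ?b) with (a + b).
      destruct (Nat.ltb k0 (S B)) eqn:E; [apply Nat.ltb_lt in E | apply Nat.ltb_ge in E].
      + replace (Nat.max B k0) with B by lia. replace (Nat.max (S B) k0) with (S B) by lia.
        simpl. lra.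
      + replace (Nat.max B k0) with k0 by lia. replace (Nat.max (S B) k0) with k0 by lia. lra. }
  rewrite E. pose proof (half_pow_pos (Nat.max B k0)). lra.
Qed.

Lemma sum_n_half_pow (B : nat) : sum_n (fun k => (1 / 2) ^ k) B <= 2.
Proof.
  assert (E : sum_n (fun k => (1 / 2) ^ k) B = 2 - 2 * (1 / 2) ^ (S B)).
  { induction B as [|B IH]; [rewrite sum_O; simpl; lra |].
    rewrite sum_Sn, IH. change (plus ?a ?b) with (a + b). simpl. lra. }
  rewrite E. pose proof (half_pow_pos (S B)). lra.
Qed.

(** * Iterates of the operator *)

Lemma iter_collatz_op (v : nat -> C) n m B :
  (2 ^ n * m <= B)%nat ->
  Nat.iter n collatz_op v m
  = sum_n (fun i => if Nat.eqb (collatz_iter n i) m then v i else RtoC 0) B.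
Proof.
  revert m B. induction n as [|n IH]; intros m B HB.
  - transitivity (if Nat.leb m B then v m else @zero C_AbelianMonoid).
    + replace (Nat.leb m B) with true by (symmetry; apply Nat.leb_le; simpl in HB; lia).
      reflexivity.
    + symmetry. exact (sum_n_kronecker m B v).
  - change (collatz_op (Nat.iter n collatz_op v) m
            = sum_n (fun i => if Nat.eqb (collatzN (collatz_iter n i)) m then v i else RtoC 0) B).
    unfold collatz_op at 1.
    rewrite (sum_n_ext_loc _ (fun l => sum_n (fun i => if Nat.eqb (collatzN l) m then
               (if Nat.eqb (collatz_iter n i) l then v i else zero) else zero) B)).
    2:{ intros l Hl. rewrite <- sum_n_if, (IH l B) by (simpl in HB; nia). reflexivity. }
    rewrite sum_n_switch. apply sum_n_ext. intro i.
    rewrite (sum_n_ext _ (fun l => if Nat.eqb l (collatz_iter n i) then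
          (if Nat.eqb (collatzN l) m then v i else zero) else zero)).
    2:{ intro l. rewrite (Nat.eqb_sym (collatz_iter n i) l).
        destruct (Nat.eqb_spec l (collatz_iter n i)) as [-> |];
          [| destruct (Nat.eqb _ m)]; reflexivity. }
    rewrite sum_n_kronecker.
    destruct (Nat.eqb_spec (collatzN (collatz_iter n i)) m) as [E |];
      [| now destruct (Nat.leb _ _)].
    replace (Nat.leb (collatz_iter n i) (2 * m)) with true; [reflexivity |].
    symmetry. apply Nat.leb_le. rewrite <- E. apply le_double_collatzN.
Qed.

Definition bergman_weight (m : nat) : R := PI / INR (S m).

Lemma bergman_weight_pos m : 0 < bergman_weight m.
Proof. apply Rdiv_lt_0_compat; [apply PI_RGT_0 | apply lt_0_INR; lia]. Qed.

Lemma bergman_weight_le m M : (M <= m)%nat -> bergman_weight m <= PI / INR (S M).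
Proof.
  intro H. apply Rmult_le_compat_l; [left; apply PI_RGT_0 |].
  apply Rinv_le_contravar; [apply lt_0_INR; lia | apply le_INR; lia].
Qed.

Lemma bergman_weight_le_pow2 m e : (3 * 2 ^ e <= m)%nat -> bergman_weight m <= PI / (3 * 2 ^ e).
Proof.
  intro H. apply Rmult_le_compat_l; [left; apply PI_RGT_0 |].
  apply Rinv_le_contravar; [pose proof (pow_lt 2 e); lra |].
  apply le_INR in H. rewrite mult_INR, pow_INR in H. rewrite S_INR.
  replace (INR 3) with 3 in H by (simpl; lra). replace (INR 2) with 2 in H by (simpl; lra). lra.
Qed.

(** * Block vectors *)

Section BlockVector.

Variables (y : nat -> nat -> C) (D g : nat -> nat).

Fixpoint offset (k : nat) : nat :=
  match k with O => g O | S k' => (offset k' + g (S k'))%nat end.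

Definition block_image (n k m : nat) : C :=
  sum_n (fun j => if Nat.eqb (collatz_iter n (2 ^ offset k * j)) m then y k j else RtoC 0) (D k).

(* Block [k] only reaches exponents [>= 3 * 2 ^ offset k > k] (see [block_image_0_lt]),
   so truncating at [k <= i] loses nothing. *)
Definition block_vector (i : nat) : C := sum_n (fun k => block_image 0 k i) i.

Definition blocks_sum (F : nat -> bool) (n B m : nat) : C :=
  sum_n (fun k => if F k then block_image n k m else RtoC 0) B.

Hypothesis y_low : forall k j, (j < 3)%nat -> y k j = 0.
Hypothesis y_high : forall k j, (D k < j)%nat -> y k j = 0.
Hypothesis g_pos : forall k, (1 <= g k)%nat.
Hypothesis D_lt_gap : forall k, (D k < 3 * 2 ^ g (S k))%nat.

Lemma lt_offset k : (k < offset k)%nat.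
Proof. induction k as [|k IH]; simpl; [pose proof (g_pos 0) | pose proof (g_pos (S k))]; lia. Qed.

Lemma offset_mono k k' : (k <= k')%nat -> (offset k <= offset k')%nat.
Proof. intro H. induction H; simpl; lia. Qed.

Lemma offset_add_gap k k' : (k < k')%nat -> (offset k + g k' <= offset k')%nat.
Proof.
  intro H. destruct k' as [|k']; [lia |]. simpl. pose proof (offset_mono k k'). lia.
Qed.

Lemma block_image_0_lt k i : (i < k)%nat -> block_image 0 k i = 0.
Proof.
  intro Hik. apply (sum_n_eq_zero (G := C_AbelianMonoid)). intros j Hj.
  destruct (Nat.eqb_spec (collatz_iter 0 (2 ^ offset k * j)) i) as [E |]; [| reflexivity].
  destruct (lt_dec j 3); [apply y_low; lia | exfalso].
  pose proof (lt_offset k). pose proof (Nat.pow_gt_lin_r 2 (offset k) ltac:(lia)).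
  simpl in E. nia.
Qed.

Lemma block_vector_eq_sum K i :
  (i <= K)%nat -> block_vector i = sum_n (fun k => block_image 0 k i) K.
Proof.
  intro HK. symmetry. apply sum_n_extend; [| exact HK].
  intros k Hk. exact (block_image_0_lt k i Hk).
Qed.

Lemma iter_block_vector n m B :
  (2 ^ n * m <= B)%nat ->
  Nat.iter n collatz_op block_vector m = sum_n (fun k => block_image n k m) B.
Proof.
  intro HB. rewrite (iter_collatz_op _ n m B HB).
  rewrite (sum_n_ext_loc _ (fun i => sum_n (fun k =>
    if Nat.eqb (collatz_iter n i) m then block_image 0 k i else zero) B)).
  2:{ intros i Hi. rewrite <- sum_n_if, (block_vector_eq_sum B i Hi). reflexivity. }
  rewrite sum_n_switch. apply sum_n_ext. intro k. unfold block_image.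
  rewrite (sum_n_ext _ (fun i => sum_n (fun j => if Nat.eqb (collatz_iter n i) m then
       (if Nat.eqb (2 ^ offset k * j) i then y k j else zero) else zero) (D k)))
    by (intro i; rewrite <- sum_n_if; reflexivity).
  rewrite sum_n_switch. apply sum_n_ext. intro j.
  rewrite (sum_n_kronecker_if (fun i => Nat.eqb (collatz_iter n i) m)).
  destruct (Nat.eqb_spec (collatz_iter n (2 ^ offset k * j)) m) as [E |];
    [| now destruct (Nat.leb _ _)].
  replace (Nat.leb _ B) with true; [reflexivity |].
  symmetry. apply Nat.leb_le.
  pose proof (le_pow2_collatz_iter n (2 ^ offset k * j)). rewrite E in *. lia.
Qed.

Lemma block_image_self k m : block_image (offset k) k m = y k m.
Proof.
  unfold block_image.
  rewrite (sum_n_ext _ (fun j => if Nat.eqb j m then y k m else zero))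
    by (intro j; rewrite collatz_iter_pow2; destruct (Nat.eqb_spec j m) as [-> |]; reflexivity).
  rewrite sum_n_kronecker. destruct (Nat.leb_spec m (D k)); [reflexivity |].
  symmetry. apply y_high. lia.
Qed.

Lemma block_image_support n k m :
  (n <= offset k)%nat -> block_image n k m <> 0 ->
  exists j, (3 <= j <= D k)%nat /\ (2 ^ (offset k - n) * j = m)%nat.
Proof.
  intros Hn Hne. apply NNPP. intro Hno. apply Hne.
  apply (sum_n_eq_zero (G := C_AbelianMonoid)). intros j Hj.
  destruct (Nat.eqb_spec (collatz_iter n (2 ^ offset k * j)) m) as [E |]; [| reflexivity].
  rewrite collatz_iter_pow2_le in E by exact Hn.
  destruct (lt_dec j 3); [apply y_low; lia |].
  exfalso. apply Hno. exists j. split; [lia | exact E].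
Qed.

Lemma block_positions_disjoint n a b ja jb :
  (a < b)%nat -> (n <= offset a)%nat -> (ja <= D a)%nat -> (3 <= jb)%nat ->
  (2 ^ (offset a - n) * ja <> 2 ^ (offset b - n) * jb)%nat.
Proof.
  intros Hab Hna Hja Hjb.
  pose proof (offset_mono (S a) b Hab). pose proof (D_lt_gap a). simpl in *.
  assert (Hpow : (2 ^ (offset a - n + g (S a)) <= 2 ^ (offset b - n))%nat)
    by (apply Nat.pow_le_mono_r; lia).
  rewrite Nat.pow_add_r in Hpow.
  assert (0 < 2 ^ (offset a - n))%nat by (apply Nat.neq_0_lt_0, Nat.pow_nonzero; lia).
  nia.
Qed.

Hypothesis block_energy_small :
  forall k, PI / (3 * 2 ^ g k) * sum_n (fun j => Cmod (y k j) ^ 2) (D k) <= (1 / 2) ^ k.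

Definition block_energy_at (n k m : nat) : R :=
  sum_n (fun j => if Nat.eqb (collatz_iter n (2 ^ offset k * j)) m
                  then Cmod (y k j) ^ 2 else 0) (D k).

Lemma Cmod_sq_block_image_le n k m :
  (n <= offset k)%nat -> Cmod (block_image n k m) ^ 2 <= block_energy_at n k m.
Proof.
  intro Hn. unfold block_image, block_energy_at.
  eapply Rle_trans; [apply Cmod_sum_n_sq_le_of_single |].
  - intros a b _ _ Ha Hb.
    destruct (Nat.eqb_spec (collatz_iter n (2 ^ offset k * a)) m) as [Ea |]; [| contradiction].
    destruct (Nat.eqb_spec (collatz_iter n (2 ^ offset k * b)) m) as [Eb |]; [| contradiction].
    rewrite collatz_iter_pow2_le in Ea, Eb by exact Hn. rewrite <- Eb in Ea.
    apply Nat.mul_cancel_l in Ea; [exact Ea | apply Nat.pow_nonzero; lia].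
  - apply sum_n_le. intros j _. rewrite Cmod_if. destruct (Nat.eqb _ m); [apply Rle_refl |].
    rewrite pow_i by lia. apply Rle_refl.
Qed.

Lemma Cmod_sq_blocks_sum_le F n B m :
  (forall k, F k = true -> (n <= offset k)%nat) ->
  Cmod (blocks_sum F n B m) ^ 2 <= sum_n (fun k => if F k then block_energy_at n k m else 0) B.
Proof.
  intro HF. eapply Rle_trans; [apply Cmod_sum_n_sq_le_of_single |].
  - intros a b _ _ Ha Hb.
    destruct (F a) eqn:Fa; [| contradiction]. destruct (F b) eqn:Fb; [| contradiction].
    destruct (block_image_support n a m (HF a Fa) Ha) as [ja [Hja Ea]].
    destruct (block_image_support n b m (HF b Fb) Hb) as [jb [Hjb Eb]].
    destruct (lt_eq_lt_dec a b) as [[Hab | Hab] | Hab]; [exfalso | exact Hab | exfalso].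
    + apply (block_positions_disjoint n a b ja jb); [exact Hab | auto | lia | lia | lia].
    + apply (block_positions_disjoint n b a jb ja); [exact Hab | auto | lia | lia | lia].
  - apply sum_n_le. intros k _. rewrite Cmod_if. destruct (F k) eqn:Fk.
    + apply Cmod_sq_block_image_le, HF, Fk.
    + rewrite pow_i by lia. apply Rle_refl.
Qed.

Lemma weighted_block_energy_le n k M :
  (n + g k <= offset k)%nat ->
  sum_n (fun m => bergman_weight m * block_energy_at n k m) M
  <= PI / (3 * 2 ^ g k) * sum_n (fun j => Cmod (y k j) ^ 2) (D k).
Proof.
  intro Hn. unfold block_energy_at.
  rewrite (sum_n_ext _ (fun m => sum_n (fun j => bergman_weight m *
    (if Nat.eqb (collatz_iter n (2 ^ offset k * j)) m then Cmod (y k j) ^ 2 else 0)) (D k)))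
    by (intro m; symmetry; apply sum_n_scal_R).
  rewrite sum_n_switch, <- sum_n_scal_R. apply sum_n_le. intros j _.
  destruct (lt_dec j 3) as [Hj | Hj].
  - rewrite y_low, Cmod_0 by exact Hj. rewrite pow_i, Rmult_0_r by lia.
    apply Rle_trans with (sum_n (fun _ => 0) M); [apply sum_n_le; intros m _ |].
    + destruct (Nat.eqb _ m); lra.
    + right. apply (sum_n_zero (G := R_AbelianMonoid)).
  - set (p := collatz_iter n (2 ^ offset k * j)).
    assert (Hp : (3 * 2 ^ g k <= p)%nat).
    { unfold p. rewrite collatz_iter_pow2_le by lia.
      assert (2 ^ g k <= 2 ^ (offset k - n))%nat by (apply Nat.pow_le_mono_r; lia). nia. }
    rewrite (sum_n_ext _ (fun m => if Nat.eqb m p then bergman_weight p * Cmod (y k j) ^ 2 else 0))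
      by (intro m; rewrite Nat.eqb_sym; destruct (Nat.eqb_spec m p) as [-> |]; [| apply Rmult_0_r];
          reflexivity).
    eapply Rle_trans; [apply sum_n_kronecker_le |].
    + pose proof (bergman_weight_pos p). pose proof (pow2_ge_0 (Cmod (y k j))). nra.
    + apply Rmult_le_compat_r; [apply pow2_ge_0 | apply bergman_weight_le_pow2, Hp].
Qed.

Lemma weighted_blocks_sum_le F n B M :
  (forall k, F k = true -> (n + g k <= offset k)%nat) ->
  sum_n (fun m => bergman_weight m * Cmod (blocks_sum F n B m) ^ 2) M
  <= sum_n (fun k => if F k then (1 / 2) ^ k else 0) B.
Proof.
  intro HF.
  apply Rle_trans with (sum_n (fun m => sum_n (fun k =>
    if F k then bergman_weight m * block_energy_at n k m else 0) B) M).
  { apply sum_n_le. intros m _. rewrite <- (sum_n_ext (fun k => bergman_weight m *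
      (if F k then block_energy_at n k m else 0))) by (intro k; destruct (F k); lra).
    rewrite sum_n_scal_R. apply Rmult_le_compat_l; [left; apply bergman_weight_pos |].
    apply Cmod_sq_blocks_sum_le. intros k Fk. specialize (HF k Fk). lia. }
  rewrite sum_n_switch. apply sum_n_le. intros k _. destruct (F k) eqn:Fk.
  - eapply Rle_trans; [apply weighted_block_energy_le, HF, Fk | apply block_energy_small].
  - right. apply (sum_n_zero (G := R_AbelianMonoid)).
Qed.

Definition block_mass_at (n k m : nat) : R :=
  sum_n (fun j => if Nat.eqb (collatz_iter n (2 ^ offset k * j)) m then Cmod (y k j) else 0) (D k).

Definition blocks_mass_at (F : nat -> bool) (n B m : nat) : R :=
  sum_n (fun k => if F k then block_mass_at n k m else 0) B.

Definition blocks_mass (F : nat -> bool) (B : nat) : R :=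
  sum_n (fun k => if F k then sum_n (fun j => Cmod (y k j)) (D k) else 0) B.

Definition early_blocks_escape (k0 M0 : nat) : Prop :=
  forall k j t, (k < k0)%nat -> (j <= D k)%nat -> (g k0 <= t)%nat ->
    (collatz_iter t j <= 2)%nat \/ (M0 <= collatz_iter t j)%nat.

Lemma Cmod_blocks_sum_le F n B m : Cmod (blocks_sum F n B m) <= blocks_mass_at F n B m.
Proof.
  eapply Rle_trans; [apply Cmod_sum_n_le |]. apply sum_n_le. intros k _.
  rewrite Cmod_if. destruct (F k); [| apply Rle_refl].
  eapply Rle_trans; [apply Cmod_sum_n_le |]. apply sum_n_le. intros j _.
  rewrite Cmod_if. apply Rle_refl.
Qed.

Lemma blocks_mass_at_nonneg F n B m : 0 <= blocks_mass_at F n B m.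
Proof.
  apply sum_n_nonneg. intros k _. destruct (F k); [| apply Rle_refl].
  apply sum_n_nonneg. intros j _. destruct (Nat.eqb _ m); [apply Cmod_ge_0 | apply Rle_refl].
Qed.

Lemma blocks_mass_at_le F n B m : blocks_mass_at F n B m <= blocks_mass F B.
Proof.
  apply sum_n_le. intros k _. destruct (F k); [| apply Rle_refl].
  apply sum_n_le. intros j _. destruct (Nat.eqb _ m); [apply Rle_refl | apply Cmod_ge_0].
Qed.

Lemma sum_blocks_mass_at_le F n B M :
  sum_n (fun m => blocks_mass_at F n B m) M <= blocks_mass F B.
Proof.
  unfold blocks_mass_at, block_mass_at. rewrite sum_n_triple_switch.
  apply sum_n_le. intros k _. destruct (F k); [| apply Rle_refl].
  apply sum_n_le. intros j _.
  rewrite (sum_n_ext _ (fun m => if Nat.eqb m (collatz_iter n (2 ^ offset k * j))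
                                 then Cmod (y k j) else 0))
    by (intro m; rewrite Nat.eqb_sym; reflexivity).
  apply sum_n_kronecker_le, Cmod_ge_0.
Qed.

Lemma blocks_mass_at_escaped k0 M0 B m :
  early_blocks_escape k0 M0 -> (3 <= m)%nat -> (m < M0)%nat ->
  blocks_mass_at (fun k => Nat.ltb k k0) (offset k0) B m = 0.
Proof.
  intros Hesc H3 HM. apply (sum_n_eq_zero (G := R_AbelianMonoid)). intros k _.
  destruct (Nat.ltb_spec k k0) as [Hk |]; [| reflexivity].
  apply (sum_n_eq_zero (G := R_AbelianMonoid)). intros j Hj.
  destruct (Nat.eqb_spec (collatz_iter (offset k0) (2 ^ offset k * j)) m) as [E |]; [| reflexivity].
  exfalso. pose proof (offset_add_gap k k0 Hk).
  rewrite collatz_iter_pow2_ge in E by lia.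
  destruct (Hesc k j (offset k0 - offset k)%nat Hk Hj ltac:(lia)); lia.
Qed.

Lemma early_blocks_weighted_le k0 M0 B M :
  early_blocks_escape k0 M0 ->
  sum_n (fun m => if Nat.leb 3 m then bergman_weight m *
           Cmod (blocks_sum (fun k => Nat.ltb k k0) (offset k0) B m) ^ 2 else 0) M
  <= PI / INR (S M0) * blocks_mass (fun k => Nat.ltb k k0) B ^ 2.
Proof.
  intro Hesc.
  set (F := fun k => Nat.ltb k k0). set (rho := blocks_mass_at F (offset k0) B).
  set (Rm := blocks_mass F B). set (c := PI / INR (S M0)).
  assert (Hc : 0 < c) by (apply Rdiv_lt_0_compat; [apply PI_RGT_0 | apply lt_0_INR; lia]).
  assert (HR : 0 <= Rm) by (eapply Rle_trans; [apply (blocks_mass_at_nonneg F (offset k0) B 0) |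
                                                 apply blocks_mass_at_le]).
  apply Rle_trans with (sum_n (fun m => c * Rm * rho m) M).
  - apply sum_n_le. intros m _.
    pose proof (Cmod_blocks_sum_le F (offset k0) B m) as Ha.
    pose proof (blocks_mass_at_nonneg F (offset k0) B m) as Hb0.
    pose proof (blocks_mass_at_le F (offset k0) B m) as Hb.
    pose proof (Cmod_ge_0 (blocks_sum F (offset k0) B m)).
    fold rho Rm in Ha, Hb0, Hb.
    destruct (Nat.leb_spec 3 m) as [H3 |]; [| apply Rmult_le_pos; [nra | exact Hb0]].
    destruct (lt_dec m M0) as [HmM | HmM].
    + assert (Hz : rho m = 0) by exact (blocks_mass_at_escaped k0 M0 B m Hesc H3 HmM).
      rewrite Hz in *. replace (Cmod (blocks_sum F (offset k0) B m)) with 0 by lra.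
      rewrite pow_i by lia. lra.
    + assert (Hw : bergman_weight m <= c) by (apply bergman_weight_le; lia).
      pose proof (bergman_weight_pos m).
      assert (Cmod (blocks_sum F (offset k0) B m) ^ 2 <= Rm * rho m) by nra.
      rewrite Rmult_assoc. apply Rmult_le_compat; nra.
  - rewrite sum_n_scal_R. replace (c * Rm ^ 2) with (c * Rm * Rm) by ring.
    apply Rmult_le_compat_l; [nra | apply sum_blocks_mass_at_le].
Qed.

Lemma block_vector_in_bergman : in_bergman block_vector.
Proof.
  apply (ex_series_le_of_partial_sums _ 2).
  - intro m. apply Rmult_le_pos; [left; apply bergman_weight_pos | apply pow2_ge_0].
  - intro M.
    rewrite (sum_n_ext_loc _ (fun m => bergman_weight m *
      Cmod (blocks_sum (fun _ => true) 0 M m) ^ 2)).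
    + eapply Rle_trans; [apply (weighted_blocks_sum_le (fun _ => true)) | apply sum_n_half_pow].
      intros [|k] _; simpl; [| pose proof (offset_mono 0 k)]; lia.
    + intros m Hm. unfold bergman_terms. do 3 f_equal.
      exact (block_vector_eq_sum M m Hm).
Qed.

Lemma iter_block_vector_split k0 m B :
  (2 ^ offset k0 * m <= B)%nat -> (k0 <= B)%nat ->
  Nat.iter (offset k0) collatz_op block_vector m
  = (y k0 m + blocks_sum (fun k => Nat.ltb k k0) (offset k0) B m
            + blocks_sum (fun k => Nat.ltb k0 k) (offset k0) B m)%C.
Proof.
  intros HB Hk0. rewrite (iter_block_vector _ m B HB).
  set (b := fun k => block_image (offset k0) k m).
  rewrite (sum_n_ext _ (fun k => plus (plus (if Nat.ltb k k0 then b k else zero)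
             (if Nat.eqb k k0 then b k else zero)) (if Nat.ltb k0 k then b k else zero))).
  - rewrite !sum_n_plus, sum_n_kronecker.
    replace (Nat.leb k0 B) with true by (symmetry; apply Nat.leb_le, Hk0).
    change (sum_n (fun k => if Nat.ltb k k0 then b k else zero) B)
      with (blocks_sum (fun k => Nat.ltb k k0) (offset k0) B m).
    change (sum_n (fun k => if Nat.ltb k0 k then b k else zero) B)
      with (blocks_sum (fun k => Nat.ltb k0 k) (offset k0) B m).
    unfold b. rewrite block_image_self.
    repeat change (@plus C_AbelianMonoid ?u ?v) with (Cplus u v). ring.
  - intro k. match goal with |- ?l = ?r => change (@eq C l r) end.
    repeat change (@plus C_AbelianMonoid ?u ?v) with (Cplus u v).
    change (@zero C_AbelianMonoid) with (RtoC 0).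
    destruct (Nat.ltb_spec k k0), (Nat.eqb_spec k k0), (Nat.ltb_spec k0 k); try lia; ring.
Qed.

Lemma blocks_mass_early_extend k0 B :
  (k0 <= B)%nat -> blocks_mass (fun k => Nat.ltb k k0) B = blocks_mass (fun k => Nat.ltb k k0) k0.
Proof.
  intro HB. apply (sum_n_extend (G := R_AbelianMonoid)); [| exact HB].
  intros k Hk. destruct (Nat.ltb_spec k k0); [lia | reflexivity].
Qed.

Lemma iter_block_vector_estimate (f : nat -> C) k0 M0 delta :
  early_blocks_escape k0 M0 ->
  PI / INR (S M0) * blocks_mass (fun k => Nat.ltb k k0) k0 ^ 2 <= (1 / 2) ^ k0 ->
  (forall M, sum_n (fun m => if Nat.leb 3 m then bergman_weight m * Cmod (y k0 m - f m) ^ 2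
                             else 0) M <= delta) ->
  forall M, sum_n (bergman_terms (fun k =>
      Nat.iter (offset k0) collatz_op block_vector k - f k
      - (if Nat.ltb k 3 then Nat.iter (offset k0) collatz_op block_vector k - f k else 0))%C) M
    <= 3 * (delta + 2 * (1 / 2) ^ k0).
Proof.
  intros Hesc Hmass Happrox M.
  set (u := Nat.iter (offset k0) collatz_op block_vector).
  set (B := (2 ^ offset k0 * M + k0)%nat).
  set (E := blocks_sum (fun k => Nat.ltb k k0) (offset k0) B).
  set (L := blocks_sum (fun k => Nat.ltb k0 k) (offset k0) B).
  apply Rle_trans with (3 * (
      sum_n (fun m => if Nat.leb 3 m then bergman_weight m * Cmod (y k0 m - f m) ^ 2 else 0) M
    + sum_n (fun m => if Nat.leb 3 m then bergman_weight m * Cmod (E m) ^ 2 else 0) M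
    + sum_n (fun m => bergman_weight m * Cmod (L m) ^ 2) M)).
  - rewrite <- !sum_n_add_R, <- sum_n_scal_R. apply sum_n_le. intros m Hm.
    unfold bergman_terms. fold (bergman_weight m).
    pose proof (bergman_weight_pos m). pose proof (pow2_ge_0 (Cmod (L m))).
    destruct (Nat.ltb_spec m 3); destruct (Nat.leb_spec 3 m); try lia.
    + replace (u m - f m - (u m - f m))%C with (RtoC 0) by ring.
      rewrite Cmod_0, pow_i by lia. nra.
    + replace (u m - f m - 0)%C with ((y k0 m - f m) + E m + L m)%C
        by (unfold u, E, L; rewrite (iter_block_vector_split k0 m B) by nia; ring).
      pose proof (Cmod_add3_sq_le (y k0 m - f m) (E m) (L m)). nra.
  - assert (HE := early_blocks_weighted_le k0 M0 B M Hesc).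
    rewrite blocks_mass_early_extend in HE by lia.
    assert (HL := weighted_blocks_sum_le (fun k => Nat.ltb k0 k) (offset k0) B M).
    pose proof (sum_n_half_pow_gt k0 B). pose proof (Happrox M).
    assert (sum_n (fun m => bergman_weight m * Cmod (L m) ^ 2) M <= (1 / 2) ^ k0).
    { eapply Rle_trans; [apply HL | assumption].
      intros k Hk. apply Nat.ltb_lt in Hk. pose proof (offset_add_gap k0 k Hk). lia. }
    fold E in HE. lra.
Qed.

End BlockVector.

(** * A dense sequence of targets *)

Lemma exists_nat_gt (x : R) : exists N : nat, x < INR N.
Proof.
  destruct (archimed x) as [H1 _].
  destruct (Z_le_gt_dec 0 (up x)) as [Hz | Hz].
  - exists (Z.to_nat (up x)). rewrite INR_IZR_INZ, Z2Nat.id by exact Hz. lra.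
  - exists 0%nat. assert (IZR (up x) < 0) by (apply IZR_lt; lia). simpl. lra.
Qed.

Lemma sum_n_le_head_tail (a b : nat -> R) (c : R) N M :
  0 <= c -> (forall m, (m <= N)%nat -> a m <= c) -> (forall m, (N < m)%nat -> a m <= b m) ->
  sum_n a M <= INR (S N) * c + sum_n_m b (S N) M.
Proof.
  intros Hc Hhead Htail.
  apply Rle_trans with (sum_n (fun m => if Nat.leb m N then c else b m) M).
  { apply sum_n_le. intros m _. destruct (Nat.leb_spec m N); [apply Hhead | apply Htail]; lia. }
  destruct (le_lt_dec M N) as [HMN | HNM].
  - rewrite (sum_n_ext_loc _ (fun _ => c)), sum_n_const, sum_n_m_zero by
      (try (intros m Hm; destruct (Nat.leb_spec m N); [reflexivity |]); lia).
    change (@zero R_AbelianMonoid) with 0.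
    pose proof (le_INR (S M) (S N) ltac:(lia)). nra.
  - unfold sum_n. rewrite (sum_n_m_Chasles _ 0 N M) by lia.
    rewrite (sum_n_m_ext_loc _ (fun _ => c) 0 N), sum_n_m_const, Nat.sub_0_r.
    2:{ intros m Hm. destruct (Nat.leb_spec m N); [reflexivity | lia]. }
    rewrite (sum_n_m_ext_loc _ b (S N) M); [apply Rle_refl |].
    intros m Hm. destruct (Nat.leb_spec m N); [lia | reflexivity].
Qed.

Definition int_of_code (c : nat) : Z :=
  let (a, b) := Cantor.of_nat c in (Z.of_nat a - Z.of_nat b)%Z.

Lemma int_of_code_surj (z : Z) : exists c, int_of_code c = z.
Proof.
  exists (Cantor.to_nat (Z.to_nat z, Z.to_nat (- z))).
  unfold int_of_code. rewrite Cantor.cancel_of_to. lia.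
Qed.

Definition gauss_of_code (Q : R) (c : nat) : C :=
  let (a, b) := Cantor.of_nat c in (IZR (int_of_code a) / Q, IZR (int_of_code b) / Q).

Lemma round_to_grid (Q x : R) : 0 < Q -> exists z : Z, Rabs (IZR z / Q - x) <= 1 / Q.
Proof.
  intro HQ. exists (up (Q * x)). destruct (archimed (Q * x)) as [H1 H2].
  replace (IZR (up (Q * x)) / Q - x) with ((IZR (up (Q * x)) - Q * x) / Q) by (field; lra).
  rewrite Rabs_right.
  - apply Rmult_le_compat_r; [left; apply Rinv_0_lt_compat |]; lra.
  - apply Rle_ge, Rdiv_le_0_compat; lra.
Qed.

Lemma Cmod_sq (z : C) : Cmod z ^ 2 = fst z ^ 2 + snd z ^ 2.
Proof. apply pow2_sqrt. pose proof (pow2_ge_0 (fst z)). pose proof (pow2_ge_0 (snd z)). lra. Qed.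

Lemma gauss_of_code_approx (Q : R) (w : C) :
  0 < Q -> exists c, Cmod (gauss_of_code Q c - w) ^ 2 <= 2 / Q ^ 2.
Proof.
  intro HQ.
  destruct (round_to_grid Q (fst w) HQ) as [z1 H1].
  destruct (round_to_grid Q (snd w) HQ) as [z2 H2].
  destruct (int_of_code_surj z1) as [c1 <-]. destruct (int_of_code_surj z2) as [c2 <-].
  exists (Cantor.to_nat (c1, c2)).
  unfold gauss_of_code. rewrite Cantor.cancel_of_to, Cmod_sq. simpl fst; simpl snd.
  assert (Hsq : forall r, Rabs r <= 1 / Q -> r ^ 2 <= 1 / Q ^ 2).
  { intros r Hr. replace (1 / Q ^ 2) with ((1 / Q) ^ 2) by (field; lra).
    rewrite <- (pow2_abs r). apply pow_incr. split; [apply Rabs_pos | exact Hr]. }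
  apply Hsq in H1, H2. replace (2 / Q ^ 2) with (1 / Q ^ 2 + 1 / Q ^ 2) by (field; lra).
  unfold Rminus in H1, H2. lra.
Qed.

Fixpoint code_nth (s i : nat) : nat :=
  match i with
  | O => fst (Cantor.of_nat s)
  | S i' => code_nth (snd (Cantor.of_nat s)) i'
  end.

Lemma code_nth_surj L (h : nat -> nat) : exists s, forall i, (i <= L)%nat -> code_nth s i = h i.
Proof.
  revert h. induction L as [|L IH]; intro h.
  - exists (Cantor.to_nat (h 0%nat, 0%nat)). intros i Hi. replace i with 0%nat by lia.
    cbn [code_nth]. rewrite Cantor.cancel_of_to. reflexivity.
  - destruct (IH (fun i => h (S i))) as [s Hs].
    exists (Cantor.to_nat (h 0%nat, s)).
    intros [|i] Hi; cbn [code_nth]; rewrite Cantor.cancel_of_to; [reflexivity | apply Hs; lia].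
Qed.

(* Targets are the polynomials supported in degrees [3..N] with coefficients in the grid
   [(Z + iZ) / (q+1)]; the code [t] packs [(q, (N, s))]. *)
Definition target (t m : nat) : C :=
  let (q, r) := Cantor.of_nat t in
  let (N, s) := Cantor.of_nat r in
  if (Nat.leb 3 m && Nat.leb m N)%bool then gauss_of_code (INR (S q)) (code_nth s (m - 3)) else 0.

Definition target_len (t : nat) : nat := fst (Cantor.of_nat (snd (Cantor.of_nat t))).

Lemma target_low t m : (m < 3)%nat -> target t m = 0.
Proof.
  intro Hm. unfold target. destruct (Cantor.of_nat t) as [q r], (Cantor.of_nat r) as [N s].
  destruct (Nat.leb_spec 3 m); [lia | reflexivity].
Qed.

Lemma target_high t m : (target_len t < m)%nat -> target t m = 0.
Proof.
  unfold target, target_len. destruct (Cantor.of_nat t) as [q r]. simpl.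
  destruct (Cantor.of_nat r) as [N s]. simpl. intro Hm.
  destruct (Nat.leb_spec m N); [lia | now rewrite Bool.andb_false_r].
Qed.

Lemma target_grid_approx (f : nat -> C) q N :
  exists t, (forall m, (3 <= m <= N)%nat -> Cmod (target t m - f m) ^ 2 <= 2 / INR (S q) ^ 2) /\
            (forall m, (N < m)%nat -> target t m = 0).
Proof.
  destruct (functional_choice (fun i c =>
      Cmod (gauss_of_code (INR (S q)) c - f (i + 3)%nat) ^ 2 <= 2 / INR (S q) ^ 2)) as [h Hh].
  { intro i. apply gauss_of_code_approx, lt_0_INR. lia. }
  destruct (code_nth_surj N h) as [s Hs].
  exists (Cantor.to_nat (q, Cantor.to_nat (N, s))).
  unfold target. rewrite !Cantor.cancel_of_to. split; intros m Hm.
  - replace (Nat.leb 3 m && Nat.leb m N)%bool with true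
      by (symmetry; apply andb_true_intro; split; apply Nat.leb_le; lia).
    rewrite Hs by lia. specialize (Hh (m - 3)%nat). now replace (m - 3 + 3)%nat with m in Hh by lia.
  - replace (Nat.leb m N) with false by (symmetry; apply Nat.leb_gt, Hm).
    now rewrite Bool.andb_false_r.
Qed.

Lemma target_approx (f : nat -> C) (delta : R) :
  in_bergman f -> 0 < delta ->
  exists t, forall M, sum_n (fun m => if Nat.leb 3 m then
    bergman_weight m * Cmod (target t m - f m) ^ 2 else 0) M <= delta.
Proof.
  intros Hf Hd. pose proof PI_RGT_0.
  destruct (Cauchy_ex_series _ Hf (mkposreal (delta / 2) ltac:(lra))) as [N HN]. simpl in HN.
  destruct (exists_nat_gt (4 * PI * INR (S N) / delta)) as [q Hq].
  set (Q := INR (S q)).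
  assert (HQ : 4 * PI * INR (S N) < Q * delta).
  { replace (4 * PI * INR (S N)) with (4 * PI * INR (S N) / delta * delta) by (field; lra).
    apply Rmult_lt_compat_r; [lra |]. unfold Q. rewrite (S_INR q). lra. }
  assert (HQ1 : 1 <= Q) by (unfold Q; rewrite (S_INR q); pose proof (pos_INR q); lra).
  destruct (target_grid_approx f q N) as (t & Hnear & Hfar).
  exists t. intro M.
  eapply Rle_trans; [apply (sum_n_le_head_tail _ (bergman_terms f) (2 * PI / Q) N M) |].
  - apply Rdiv_le_0_compat; lra.
  - intros m Hm. destruct (Nat.leb_spec 3 m) as [H3 |]; [| apply Rdiv_le_0_compat; lra].
    specialize (Hnear m ltac:(lia)). fold Q in Hnear.
    assert (Hw : bergman_weight m <= PI)
      by (pose proof (bergman_weight_le m 0 ltac:(lia)); simpl in *; lra).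
    assert (2 / Q ^ 2 <= 2 / Q) by (apply Rmult_le_compat_l; [lra | apply Rinv_le_contravar; nra]).
    pose proof (bergman_weight_pos m). pose proof (pow2_ge_0 (Cmod (target t m - f m))).
    replace (2 * PI / Q) with (PI * (2 / Q)) by (field; lra). apply Rmult_le_compat; lra.
  - intros m Hm. rewrite Hfar by exact Hm.
    destruct (Nat.leb 3 m);
      [| apply Rmult_le_pos; [left; apply bergman_weight_pos | apply pow2_ge_0]].
    replace (RtoC 0 - f m)%C with (- f m)%C by ring. rewrite Cmod_opp. apply Rle_refl.
  - assert (Hhead : INR (S N) * (2 * PI / Q) <= delta / 2).
    { apply Rmult_le_reg_r with (2 * Q); [lra |].
      replace (INR (S N) * (2 * PI / Q) * (2 * Q)) with (4 * PI * INR (S N)) by (field; lra). lra. }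
    destruct (le_lt_dec (S N) M) as [HM | HM].
    + assert (Htail : sum_n_m (bergman_terms f) (S N) M < delta / 2)
        by (eapply Rle_lt_trans; [apply Rle_abs | exact (HN (S N) M ltac:(lia) ltac:(lia))]).
      lra.
    + rewrite sum_n_m_zero by exact HM. change (@zero R_AbelianMonoid) with 0. lra.
Qed.

Lemma dense_targets :
  exists (y : nat -> nat -> C) (D : nat -> nat),
    (forall k j, (j < 3)%nat -> y k j = 0) /\ (forall k j, (D k < j)%nat -> y k j = 0) /\
    forall f, in_bergman f -> forall delta, 0 < delta -> forall K0, exists k, (K0 <= k)%nat /\
      forall M, sum_n (fun m => if Nat.leb 3 m then
        bergman_weight m * Cmod (y k m - f m) ^ 2 else 0) M <= delta.
Proof.
  (* Index [Cantor.to_nat (t, K0) >= K0] decodes to target [t], so every target recurs. *)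
  exists (fun k => target (fst (Cantor.of_nat k))), (fun k => target_len (fst (Cantor.of_nat k))).
  split; [intros k j; apply target_low |]. split; [intros k j; apply target_high |].
  intros f Hf delta Hd K0. destruct (target_approx f delta Hf Hd) as [t Ht].
  exists (Cantor.to_nat (t, K0)). rewrite Cantor.cancel_of_to. split; [| exact Ht].
  pose proof (Cantor.to_nat_non_decreasing t K0). lia.
Qed.

(** * Choice of the parameters *)

Lemma half_pow_inv k : (1 / 2) ^ k = / 2 ^ k.
Proof. unfold Rdiv. rewrite Rmult_1_l. apply pow_inv. Qed.

Lemma div_le_half_pow (c x : R) k : 0 < x -> c * 2 ^ k <= x -> c / x <= (1 / 2) ^ k.
Proof.
  intros Hx H. pose proof (pow_lt 2 k ltac:(lra)). rewrite half_pow_inv.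
  apply Rmult_le_reg_r with (x * 2 ^ k); [nra |].
  replace (c / x * (x * 2 ^ k)) with (c * 2 ^ k) by (field; lra).
  replace (/ 2 ^ k * (x * 2 ^ k)) with x by (field; lra). exact H.
Qed.

Lemma half_pow_le_of_mul_pow2 (x : R) k : 0 < x -> 1 <= x * 2 ^ k -> (1 / 2) ^ k <= x.
Proof.
  intros Hx H. pose proof (pow_lt 2 k ltac:(lra)). rewrite half_pow_inv.
  apply Rmult_le_reg_r with (2 ^ k); [lra |]. rewrite Rinv_l; lra.
Qed.

Lemma exists_pow2_ge (x : R) : exists N : nat, forall e, (N <= e)%nat -> x <= 2 ^ e.
Proof.
  destruct (exists_nat_gt x) as [N HN]. exists N. intros e He.
  assert (Hlin : INR e <= 2 ^ e).
  { clear. induction e as [|e IH]; [simpl; lra |].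
    rewrite S_INR. simpl. pose proof (pow_R1_Rle 2 e ltac:(lra)). lra. }
  apply le_INR in He. lra.
Qed.

Lemma exists_escape_thresholds (y : nat -> nat -> C) (D : nat -> nat) :
  exists M0 : nat -> nat, forall k,
    PI / INR (S (M0 k)) * blocks_mass y D (fun k' => Nat.ltb k' k) k ^ 2 <= (1 / 2) ^ k.
Proof.
  apply (functional_choice (fun k M => PI / INR (S M) *
           blocks_mass y D (fun k' => Nat.ltb k' k) k ^ 2 <= (1 / 2) ^ k)).
  intro k. set (c := PI * blocks_mass y D (fun k' => Nat.ltb k' k) k ^ 2).
  destruct (exists_nat_gt (c * 2 ^ k)) as [N HN]. exists N.
  replace (PI / INR (S N) * _) with (c / INR (S N)) by (unfold c; field; apply not_0_INR; lia).
  apply div_le_half_pow; [apply lt_0_INR; lia | rewrite S_INR; lra].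
Qed.

Lemma exists_gaps (Hc : no_nontrivial_positive_cycle) (y : nat -> nat -> C) (D M0 : nat -> nat) :
  exists g : nat -> nat,
    (forall k, (1 <= g k)%nat) /\ (forall k, (D k < 3 * 2 ^ g (S k))%nat) /\
    (forall k, PI / (3 * 2 ^ g k) * sum_n (fun j => Cmod (y k j) ^ 2) (D k) <= (1 / 2) ^ k) /\
    (forall k, early_blocks_escape D g k (M0 k)).
Proof.
  destruct (functional_choice (fun k e => (1 <= e)%nat /\ (D (pred k) < 3 * 2 ^ e)%nat /\
    PI / (3 * 2 ^ e) * sum_n (fun j => Cmod (y k j) ^ 2) (D k) <= (1 / 2) ^ k /\
    forall k' j t, (k' < k)%nat -> (j <= D k')%nat -> (e <= t)%nat ->
      (collatz_iter t j <= 2)%nat \/ (M0 k <= collatz_iter t j)%nat)) as [g Hg].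
  - intro k.
    destruct (collatz_escape_blocks Hc D k (M0 k)) as [G HG].
    set (Y := sum_n (fun j => Cmod (y k j) ^ 2) (D k)).
    destruct (exists_pow2_ge (PI * Y / 3 * 2 ^ k)) as [N HN].
    set (e := Nat.max 1 (Nat.max G (Nat.max (D (pred k)) N))).
    exists e. split; [lia |]. split; [pose proof (Nat.pow_gt_lin_r 2 e ltac:(lia)); lia |].
    split; [| intros k' j t Hk' Hj Ht; apply (HG k'); lia].
    pose proof (pow_lt 2 e ltac:(lra)).
    replace (PI / (3 * 2 ^ e) * Y) with (PI * Y / 3 / 2 ^ e) by (field; lra).
    apply div_le_half_pow; [lra | apply HN; lia].
  - exists g. repeat split; intro k.
    + apply Hg.
    + apply (Hg (S k)).
    + apply Hg.
    + unfold early_blocks_escape. apply Hg.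
Qed.

Lemma bergman_norm_lt_of_partial_sums (a : nat -> C) (B eps : R) :
  0 < eps -> B < eps ^ 2 -> (forall M, sum_n (bergman_terms a) M <= B) ->
  in_bergman a /\ bergman_norm a < eps.
Proof.
  intros Heps HB Hsum.
  assert (Hterm : forall m, 0 <= bergman_terms a m)
    by (intro m; apply Rmult_le_pos; [left; apply bergman_weight_pos | apply pow2_ge_0]).
  destruct (ex_series_le_of_partial_sums (bergman_terms a) B Hterm Hsum) as [Hex Hser].
  split; [exact Hex |].
  assert (HB0 : 0 <= B)
    by (specialize (Hsum 0%nat); rewrite sum_O in Hsum; specialize (Hterm 0%nat); lra).
  unfold bergman_norm. eapply Rle_lt_trans; [apply sqrt_le_1_alt, Hser |].
  rewrite <- (sqrt_pow2 eps) by lra. apply sqrt_lt_1_alt. lra.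
Qed.

Theorem mainTheorem2 :
  no_nontrivial_positive_cycle ->
  exists v : nat -> C, in_bergman v /\
    forall f : nat -> C, in_bergman f ->
    forall eps : R, 0 < eps ->
    exists (n : nat) (x : nat -> C), in_X x /\
      in_bergman (fun k => Nat.iter n collatz_op v k - f k - x k)%C /\
      bergman_norm (fun k => Nat.iter n collatz_op v k - f k - x k)%C < eps.
Proof.
  intro Hc.
  destruct dense_targets as (y & D & Hlow & Hhigh & Hdense).
  destruct (exists_escape_thresholds y D) as [M0 HM0].
  destruct (exists_gaps Hc y D M0) as (g & Hpos & Hgap & Henergy & Hesc).
  exists (block_vector y D g). split; [now apply block_vector_in_bergman |].
  intros f Hf eps Heps.
  assert (Heps2 : 0 < eps ^ 2) by (apply pow_lt; lra).
  destruct (exists_pow2_ge (24 / eps ^ 2)) as [K0 HK0].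
  destruct (Hdense f Hf (eps ^ 2 / 12) ltac:(lra) K0) as [k0 [Hk0 Happrox]].
  assert (Hhalf : (1 / 2) ^ k0 <= eps ^ 2 / 24).
  { eapply Rle_trans; [apply half_pow_antimono, Hk0 | apply half_pow_le_of_mul_pow2; [lra |]].
    specialize (HK0 K0 (le_n _)).
    apply Rmult_le_compat_l with (r := eps ^ 2 / 24) in HK0; [| lra].
    replace (eps ^ 2 / 24 * (24 / eps ^ 2)) with 1 in HK0 by (field; lra). exact HK0. }
  set (u := Nat.iter (offset g k0) collatz_op (block_vector y D g)).
  exists (offset g k0), (fun k => if Nat.ltb k 3 then (u k - f k)%C else 0).
  split; [intros m Hm; destruct (Nat.ltb_spec m 3); [lia | reflexivity] |].
  apply (bergman_norm_lt_of_partial_sums _ (3 * (eps ^ 2 / 12 + 2 * (1 / 2) ^ k0))); [lra | lra |].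
  exact (iter_block_vector_estimate y D g Hlow Hhigh Hpos Hgap Henergy f k0 (M0 k0) _
           (Hesc k0) (HM0 k0) Happrox).
Qed.
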